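(* Let $k,n\ge1$ and $T:\{0,1\}^k\to\{0,1\}$ be a truth table. Assume that for every triple $(\mathbf z^{[1]},\mathbf z^{[0]},\mathbf z^{[-1]})$ of $n$-bit strings and every nonempty $S\subseteq\{1,0,-1\}$, the probability $\mathbf E_\sigma\mathbf 1[\mathbf z^{[t]}\not\vdash\sigma\ \forall t\in S]$ depends on the triple only through its configuration basis numbers $(n_s)_{s\in\{0,1\}^3}$ and is a polynomial in the quantities $n_s+n_{\bar s}$. Then for every function $f:\{0,1\}^3\to\mathbb C$, the expectation $$\mathbf E_\sigma f\big(\mathbf 1[\mathbf z^{[1]}\not\vdash\sigma],\mathbf 1[\mathbf z^{[0]}\not\vdash\sigma],\mathbf 1[\mathbf z^{[-1]}\not\vdash\sigma]\big)$$ is a polynomial in the quantities $n_s+n_{\bar s}$, $s\in\{0,1\}^3$.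
   Context: A clause on $n$ variables is $\sigma=((l_0,\nu_0),\dots,(l_{k-1},\nu_{k-1}))$ with $l_q\in\{0,\dots,n-1\}$, $\nu_q\in\{0,1\}$; $\mathbf x\in\{0,1\}^n$ satisfies $\sigma$ ($\mathbf x\vdash\sigma$) iff $T(x_{l_0}\oplus\nu_0,\dots,x_{l_{k-1}}\oplus\nu_{k-1})=1$, and violates it ($\mathbf x\not\vdash\sigma$) otherwise. A random clause has all $l_q$ independent uniform in $\{0,\dots,n-1\}$ and all $\nu_q$ independent uniform in $\{0,1\}$; $\mathbf E_\sigma$ is expectation over it. Configuration basis numbers of the triple: $n_s=|\{j:(z^{[1]}_j,z^{[0]}_j,z^{[-1]}_j)=s\}|$; $\bar s$ is the bitwise complement of $s$. *)

From HB Require Import structures.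
From mathcomp Require Import all_boot all_order all_algebra all_field.
From mathcomp Require Import mpoly.
Set Implicit Arguments. Unset Strict Implicit. Unset Printing Implicit Defensive.
Import Order.TTheory GRing.Theory Num.Theory.
Local Open Scope ring_scope.

(* A clause on n variables of width k: q |-> (l_q, nu_q). *)
Definition clause (k n : nat) := {ffun 'I_k -> 'I_n * bool}.

Definition satisfies (k n : nat) (T : {ffun 'I_k -> bool} -> bool)
  (x : {ffun 'I_n -> bool}) (sigma : clause k n) : bool :=
  T [ffun q => x (sigma q).1 (+) (sigma q).2].

Definition violates k n T x (sigma : clause k n) : bool := ~~ satisfies T x sigma.

Definition Eclause (k n : nat) (g : clause k n -> algC) : algC :=
  (\sum_(sigma : clause k n) g sigma) / #|{: clause k n}|%:R.

(* configurations s in {0,1}^3, ordered as (z^[1]_j, z^[0]_j, z^[-1]_j) *)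
Definition cfg := (bool * bool * bool)%type.
Definition cfg_compl (s : cfg) : cfg := (~~ s.1.1, ~~ s.1.2, ~~ s.2).

(* a triple of n-bit strings: index 0 = z^[1], 1 = z^[0], 2 = z^[-1] *)
Definition triple (n : nat) := 'I_3 -> {ffun 'I_n -> bool}.

Definition config n (z : triple n) (j : 'I_n) : cfg :=
  (z ord0 j, z (inord 1) j, z (inord 2) j).

Definition nconf n (z : triple n) (s : cfg) : nat :=
  #|[set j : 'I_n | config z j == s]|.

Definition sumpoint n (z : triple n) : 'I_#|{: cfg}| -> algC :=
  fun i => (nconf z (enum_val i) + nconf z (cfg_compl (enum_val i)))%:R.

Definition poly_in_sums n (g : triple n -> algC) : Prop :=
  exists P : {mpoly algC[#|{: cfg}|]}, forall z : triple n, g z = P.@[sumpoint z].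

(* The functions g of the set of violated strings whose expectation
   E_sigma g(violated set) is a polynomial in the sums n_s + n_{bar s} form a
   vector space.  By hypothesis it contains every up-set indicator [S ⊆ ·]
   (for S empty this is the constant 1).  By Möbius inversion over the subset
   lattice the up-set indicators span all functions on {set 'I_3}, and f is
   such a function of the violated set. *)

From mathcomp Require Import all_boot all_order all_algebra all_field.
From mathcomp Require Import mpoly.
Set Implicit Arguments. Unset Strict Implicit. Unset Printing Implicit Defensive.
Import GRing.Theory Num.Theory.
Local Open Scope ring_scope.

Section SubsetIndicatorSpan.
Variables (R : pzRingType) (I : finType) (V : ({set I} -> R) -> Prop).
Hypothesis eq_V : forall g h, g =1 h -> V g -> V h.
Hypothesis V0 : V (fun _ => 0).
Hypothesis VD : forall g h, V g -> V h -> V (fun B => g B + h B).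
Hypothesis VZ : forall c g, V g -> V (fun B => c * g B).
Hypothesis V_subset : forall S : {set I}, V (fun B => (S \subset B)%:R).

Lemma V_sum (J : Type) (r : seq J) (P : pred J) (F : J -> {set I} -> R) :
  (forall j, P j -> V (F j)) -> V (fun B => \sum_(j <- r | P j) F j B).
Proof.
move=> VF; elim: r => [|j r IHr].
  by apply: eq_V V0 => B; rewrite big_nil.
have [Pj|nPj] := boolP (P j).
  by apply: eq_V (VD (VF j Pj) IHr) => B; rewrite big_cons Pj.
by apply: eq_V IHr => B; rewrite big_cons (negbTE nPj).
Qed.

Lemma sum_eq_indicator (P : pred {set I}) (B : {set I}) :
  \sum_(A | P A) (B == A)%:R = (P B)%:R :> R.
Proof.
have [PB|nPB] := boolP (P B).
  rewrite (bigD1 B) //= eqxx big1 ?addr0 // => A /andP[_ nAB].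
  by rewrite eq_sym (negbTE nAB).
by rewrite big1 // => A PA; case: eqVneq => // eBA; rewrite eBA PA in nPB.
Qed.

Lemma V_eq_indicator (A : {set I}) : V (fun B => (B == A)%:R).
Proof.
elim: {A}#|~: A| {-2}A (leqnn #|~: A|) => [|m IHm] A leAm.
  have -> : A = setT.
    by move: leAm; rewrite leqn0 cards_eq0 => /eqP CA0; rewrite -[A]setCK CA0 setC0.
  by apply: eq_V (V_subset setT) => B; rewrite subTset.
have V_proper : forall A' : {set I}, A \proper A' -> V (fun B => (B == A')%:R).
  move=> A' ltAA'; apply: IHm; rewrite -ltnS (leq_trans _ leAm) //.
  by rewrite proper_card // properC.
(* [B == A] = [A ⊆ B] - [A ⊂ B], the last term being a sum over strictly larger sets *)
apply: eq_V (VD (V_subset A) (VZ (-1) (V_sum (index_enum _) V_proper))) => B.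
rewrite sum_eq_indicator subEproper mulN1r.
by have [->|nBA] := eqVneq B A; rewrite ?properxx ?subr0 // subrr.
Qed.

Lemma subset_indicators_span (f : {set I} -> R) : V f.
Proof.
have V_terms A : xpredT A -> V (fun B => f A * (B == A)%:R).
  by move=> _; apply/VZ/V_eq_indicator.
apply: eq_V (V_sum (index_enum _) V_terms) => B.
under eq_bigr do rewrite mulr_natr mulrb eq_sym.
by rewrite -big_mkcond big_pred1_eq.
Qed.

End SubsetIndicatorSpan.

Section PolyInSums.
Variable n : nat.
Implicit Types g h : triple n -> algC.

Lemma eq_poly_in_sums g h : g =1 h -> poly_in_sums g -> poly_in_sums h.
Proof. by move=> eq_gh [P gP]; exists P => z; rewrite -eq_gh. Qed.

Lemma poly_in_sumsC c : poly_in_sums (fun _ : triple n => c).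
Proof. by exists c%:MP => z; rewrite mevalC. Qed.

Lemma poly_in_sumsD g h :
  poly_in_sums g -> poly_in_sums h -> poly_in_sums (fun z => g z + h z).
Proof. by move=> [P gP] [Q hQ]; exists (P + Q) => z; rewrite mevalD gP hQ. Qed.

Lemma poly_in_sumsZ c g : poly_in_sums g -> poly_in_sums (fun z => c * g z).
Proof. by move=> [P gP]; exists (c *: P) => z; rewrite mevalZ gP. Qed.

End PolyInSums.

Section Eclause.
Variables k n : nat.
Implicit Types g h : clause k n -> algC.

Lemma eq_Eclause g h : g =1 h -> Eclause g = Eclause h.
Proof. by move=> eq_gh; rewrite /Eclause (eq_bigr _ (fun s _ => eq_gh s)). Qed.

Lemma EclauseD g h : Eclause (fun s => g s + h s) = Eclause g + Eclause h.
Proof. by rewrite /Eclause big_split mulrDl. Qed.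

Lemma EclauseZ c g : Eclause (fun s => c * g s) = c * Eclause g.
Proof. by rewrite /Eclause -mulr_sumr mulrA. Qed.

Lemma Eclause_cst c : (0 < n)%N -> Eclause (fun _ : clause k n => c) = c.
Proof.
move=> n_gt0; have card_gt0 : (0 < #|{: clause k n}|)%N.
  by apply/card_gt0P; exists [ffun=> (Ordinal n_gt0, false)].
by rewrite /Eclause sumr_const -[c *+ _]mulr_natr mulfK // pnatr_eq0 -lt0n.
Qed.

End Eclause.

Section ViolatedSet.
Variables (k n : nat) (T : {ffun 'I_k -> bool} -> bool).

Definition violated_set (z : triple n) (sigma : clause k n) : {set 'I_3} :=
  [set t | violates T (z t) sigma].

Definition poly_expected_violation (g : {set 'I_3} -> algC) : Prop :=
  poly_in_sums (fun z => Eclause (fun sigma => g (violated_set z sigma))).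

Lemma eq_poly_expected_violation g h :
  g =1 h -> poly_expected_violation g -> poly_expected_violation h.
Proof.
by move=> eq_gh; apply: eq_poly_in_sums => z; apply: eq_Eclause => s.
Qed.

Lemma poly_expected_violationD g h :
  poly_expected_violation g -> poly_expected_violation h ->
  poly_expected_violation (fun B => g B + h B).
Proof.
move=> Pg Ph; apply: eq_poly_in_sums (poly_in_sumsD Pg Ph) => z.
by rewrite EclauseD.
Qed.

Lemma poly_expected_violationZ c g :
  poly_expected_violation g -> poly_expected_violation (fun B => c * g B).
Proof.
move=> Pg; apply: eq_poly_in_sums (poly_in_sumsZ c Pg) => z.
by rewrite EclauseZ.
Qed.

Lemma poly_expected_violation_cst c :
  (0 < n)%N -> poly_expected_violation (fun _ => c).
Proof.
move=> n_gt0; apply: eq_poly_in_sums (poly_in_sumsC n c) => z.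
by rewrite Eclause_cst.
Qed.

Lemma poly_expected_violation_subset (S : {set 'I_3}) :
  poly_in_sums (fun z : triple n => Eclause (fun sigma : clause k n =>
    ([forall t in S, violates T (z t) sigma] : bool)%:R)) ->
  poly_expected_violation (fun B => (S \subset B)%:R).
Proof.
apply: eq_poly_in_sums => z; apply: eq_Eclause => sigma.
congr (nat_of_bool _)%:R; apply/idP/idP => [/forall_inP Sviol|/subsetP Sviol].
  by apply/subsetP => t /Sviol; rewrite inE.
by apply/forall_inP => t /Sviol; rewrite inE.
Qed.

End ViolatedSet.

Theorem mainTheorem5 (k n : nat) (T : {ffun 'I_k -> bool} -> bool) :
  (0 < k)%N -> (0 < n)%N ->
  (forall S : {set 'I_3}, S != set0 ->
     poly_in_sums (fun z : triple n =>
       Eclause (fun sigma : clause k n =>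
         ([forall t in S, violates T (z t) sigma] : bool)%:R))) ->
  forall f : cfg -> algC,
    poly_in_sums (fun z : triple n =>
      Eclause (fun sigma : clause k n =>
        f (violates T (z ord0) sigma, violates T (z (inord 1)) sigma,
           violates T (z (inord 2)) sigma))).
Proof.
move=> _ n_gt0 Psubset f.
pose fB (B : {set 'I_3}) := f (ord0 \in B, inord 1 \in B, inord 2 \in B).
have PfB : @poly_expected_violation k n T fB.
  apply: (@subset_indicators_span _ _ (@poly_expected_violation k n T))
    => [g h|||c g|S].
  - exact: eq_poly_expected_violation.
  - exact: poly_expected_violation_cst.
  - exact: poly_expected_violationD.
  - exact: poly_expected_violationZ.
  - have [->|S0] := eqVneq S set0.
      apply: eq_poly_expected_violation (poly_expected_violation_cst T 1 n_gt0).
      by move=> B; rewrite sub0set.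
    exact: poly_expected_violation_subset (Psubset S S0).
apply: eq_poly_in_sums PfB => z; apply: eq_Eclause => sigma.
by rewrite /fB !inE.
Qed.
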